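(* Let $Q,K,L\subset\mathbb R^d$ be compact with $K\subset L$, equip $C(Q\oplus L)$ and $C(K)$ with supremum norms, and let $B\subset C(K)$ be a Borel set. Define $$C_B=\Big\{f\in C(Q\oplus L):\ \frac{f(\tau_Q(f|_Q)+\cdot)}{f(\tau_Q(f|_Q))}\Big|_K\in B\Big\},$$ $$C_B^*=\Big\{f\in C(Q\oplus L):\ \operatorname{argmax}_{t\in Q}f(t)\text{ is unique},\ \frac{f(\tau_Q(f|_Q)+\cdot)}{f(\tau_Q(f|_Q))}\Big|_K\in B^\circ\Big\},$$ where membership requires the quotient to be defined. Then $C_B^*$ is contained in the interior of $C_B$.
   Context: $C(U)$ denotes non-negative continuous functions on $U$; $Q\oplus L=\{q+l:q\in Q,l\in L\}$; $B^\circ$ is the interior of $B$ in $C(K)$; $\tau_Q(f)=\inf(\operatorname{argmax}_{t\in Q}f(t))$ with infimum in lexicographic order. *)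

From HB Require Import structures.
From mathcomp Require Import all_boot all_order all_algebra.
From mathcomp Require Import all_classical all_reals all_analysis.
Set Implicit Arguments. Unset Strict Implicit. Unset Printing Implicit Defensive.
Import Order.TTheory GRing.Theory Num.Theory.
Import numFieldNormedType.Exports.
Local Open Scope classical_set_scope.
Local Open Scope ring_scope.

Section Defs.
Variables (R : realType) (d : nat).
Notation pt := 'rV[R]_d.

Definition minksum (Q L : set pt) : set pt :=
  [set z | exists q l, Q q /\ L l /\ z = q + l].

(* C(U): non-negative continuous functions on U.  An element is represented
   canonically by a total function that vanishes outside U. *)
Definition Cnn (U : set pt) : set (pt -> R) :=
  [set f : pt -> R | (forall x, ~ U x -> f x = 0) /\ {within U, continuous f} /\
           (forall x, U x -> 0 <= f x)].

Definition supdist (U : set pt) (f g : pt -> R) : R :=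
  sup [set `|f x - g x| | x in U].

Definition Cinterior (U : set pt) (A : set (pt -> R)) : set (pt -> R) :=
  [set f : pt -> R | Cnn U f /\ A f /\ exists e : R, 0 < e /\
     forall g, Cnn U g -> supdist U f g < e -> A g].

Definition Copen (U : set pt) (A : set (pt -> R)) : Prop :=
  A `<=` Cnn U /\ A `<=` Cinterior U A.

Definition CBorel (U : set pt) (B : set (pt -> R)) : Prop :=
  B `<=` Cnn U /\ (<<s Cnn U, [set A | Copen U A] >>) B.

Definition lexle (u v : pt) : Prop :=
  u = v \/ exists i : 'I_d,
    (forall j : 'I_d, (j < i)%N -> u ord0 j = v ord0 j) /\ u ord0 i < v ord0 i.

Definition lexinf (S : set pt) (t : pt) : Prop :=
  (forall s, S s -> lexle t s) /\
  (forall u, (forall s, S s -> lexle u s) -> lexle u t).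

Definition argmax (Q : set pt) (f : pt -> R) : set pt :=
  [set t | Q t /\ forall s, Q s -> f s <= f t].

(* f(tau + .)/f(tau) restricted to K (canonical representative: 0 off K) *)
Definition shiftnorm (K : set pt) (f : pt -> R) (tau : pt) : pt -> R :=
  fun x => if x \in K then f (tau + x) / f tau else 0.

(* "the quotient is defined": f|_Q is defined (Q lies in the domain Q(+)L),
   tau = tau_Q(f|_Q) exists, and f(tau) <> 0. *)
Definition C_B (Q K L : set pt) (B : set (pt -> R)) : set (pt -> R) :=
  [set f : pt -> R | Cnn (minksum Q L) f /\ Q `<=` minksum Q L /\
     exists tau, lexinf (argmax Q f) tau /\ f tau != 0 /\
       B (shiftnorm K f tau)].

Definition C_B_star (Q K L : set pt) (B : set (pt -> R)) : set (pt -> R) :=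
  [set f : pt -> R | Cnn (minksum Q L) f /\ Q `<=` minksum Q L /\
     (exists t, argmax Q f = [set t]) /\
     exists tau, lexinf (argmax Q f) tau /\ f tau != 0 /\
       Cinterior K B (shiftnorm K f tau)].

End Defs.

(* Let t be the unique maximiser of f on Q.  A uniform perturbation g of f has all its
   maximisers on Q close to t, in particular the lexicographic infimum m of argmax g, which
   is attained since argmax g is compact; and g m is close to f t > 0.  Uniform continuity of f on the
   compact set Q (+) L then makes x |-> g (m + x) / g m uniformly close on K to
   x |-> f (t + x) / f t, which lies in the interior of B. *)
From HB Require Import structures.
From mathcomp Require Import all_boot all_order all_algebra.
From mathcomp Require Import all_classical all_reals all_analysis.
From mathcomp Require Import ring lra.
Set Implicit Arguments. Unset Strict Implicit. Unset Printing Implicit Defensive.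
Import Order.TTheory GRing.Theory Num.Theory.
Import numFieldNormedType.Exports.
Local Open Scope classical_set_scope.
Local Open Scope ring_scope.

Lemma quotient_dist_le {R : realFieldType} (A b p q M eps e : R) :
  0 < A -> A / 2 <= b -> 0 <= p -> p <= M ->
  `|b - A| <= eps -> `|p - q| <= 2 * eps -> eps * (4 * (M + 2 * A)) <= e * (A * A) ->
  `|p / A - q / b| <= e / 2.
Proof.
move=> A0 Ab p0 pM bA pq epsM.
have b0 : 0 < b by apply: lt_le_trans Ab; rewrite divr_gt0.
have -> : p / A - q / b = (p * (b - A) + A * (p - q)) / (A * b).
  by field; apply/andP; split; rewrite gt_eqF.
rewrite normrM normfV (gtr0_norm (mulr_gt0 A0 b0)) ler_pdivrMr ?mulr_gt0 //.
apply: le_trans (ler_normD _ _) _.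
rewrite !normrM (ger0_norm p0) (gtr0_norm A0).
have eps0 : 0 <= eps by apply: le_trans bA.
have h1 : p * `|b - A| <= M * eps by apply: ler_pM.
have h2 : A * `|p - q| <= A * (2 * eps) by apply: ler_wpM2l; [exact: ltW|].
have e0 : 0 <= e.
  have M0 : 0 <= M + 2 * A by apply: addr_ge0; [exact: le_trans pM|exact: mulr_ge0 (ltW _)].
  have : 0 <= e * (A * A) by apply: le_trans epsM; rewrite !mulr_ge0.
  by rewrite pmulr_lge0 // mulr_gt0.
have h3 : e / 2 * (A * (A / 2)) <= e / 2 * (A * b).
  by apply: ler_wpM2l; [rewrite divr_ge0|apply: ler_wpM2l; [exact: ltW|]].
nra.
Qed.

Section Lexicographic.
Context {R : realType} {d : nat}.
Local Notation pt := 'rV[R]_d.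

Lemma lexle_refl (u : pt) : lexle u u.
Proof. by left. Qed.

Lemma lexle_anti (u v : pt) : lexle u v -> lexle v u -> u = v.
Proof.
case=> [->//|[i [Hi1 Hi2]]]; case=> [->//|[j [Hj1 Hj2]]].
exfalso; have [ij|ji|ij] := ltngtP i j.
- by move: Hi2; rewrite (Hj1 i ij) ltxx.
- by move: Hj2; rewrite (Hi1 j ji) ltxx.
- have eij : i = j by apply: val_inj.
  by subst j; move: (lt_trans Hi2 Hj2); rewrite ltxx.
Qed.

Lemma lexinf_min (S : set pt) m : S m -> (forall s, S s -> lexle m s) -> lexinf S m.
Proof. by move=> Sm mS; split=> // u /(_ m Sm). Qed.

Lemma lexinf_set1 (t : pt) : lexinf [set t] t.
Proof. by apply: lexinf_min => // s ->; exact: lexle_refl. Qed.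

Lemma lexinf_set1_eq (t u : pt) : lexinf [set t] u -> u = t.
Proof. by case=> lb glb; apply: lexle_anti (lb t erefl) (glb t (lexinf_set1 t).1). Qed.

(* Induction on the number n of leading coordinates not yet known to be constant on S:
   minimise coordinate d - n.+1 by the extreme value theorem and recurse on the compact
   face of S where it is minimal. *)
Lemma compact_lexmin (S : set pt) : compact S -> S !=set0 ->
  exists2 m, S m & forall s, S s -> lexle m s.
Proof.
suff H n (S' : set pt) : compact S' -> S' !=set0 ->
  (forall s s', S' s -> S' s' -> forall j : 'I_d, (j < d - n)%N -> s ord0 j = s' ord0 j) ->
  exists2 m, S' m & forall s, S' s -> lexle m s.
  by move=> cS S0; apply: (H d) => // s s' _ _ j; rewrite subnn.
elim: n S' => [|n IH] {}S cS [m0 Sm0] Hag.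
  exists m0 => // s Ss; left; apply/rowP => j.
  by rewrite (Hag m0 s Sm0 Ss j) // subn0.
have [dn|nd] := leqP d n.
  apply: IH => //; first by exists m0.
  by move=> s s' Ss Ss' j; rewrite (_ : d - n = 0)%N //; apply/eqP; rewrite subn_eq0.
have kd : (d - n.+1 < d)%N by rewrite ltn_subrL (leq_ltn_trans (leq0n n) nd).
pose i := Ordinal kd.
have ci : {within S, continuous (fun s : pt => s ord0 i)}.
  by apply: continuous_subspaceT => x ?; exact: coord_continuous.
have [c Sc cmin] := compact_EVT_min (ex_intro _ m0 Sm0) cS ci.
rewrite inE in Sc.
pose S' := S `&` [set s : pt | s ord0 i = c ord0 i].
have cS' : compact S'.
  apply: compact_closedI => //.
  exact: (proj1 (continuous_closedP _) (@coord_continuous R 1 d ord0 i) _ (@closed_eq R _)).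
have [m [Sm mi] Hm] : exists2 m, S' m & forall s, S' s -> lexle m s.
  apply: IH => //; first by exists c.
  move=> s s' [Ss si] [Ss' s'i] j.
  rewrite -(subnSK nd) ltnS leq_eqVlt => /orP [/eqP ej|jl]; last exact: Hag.
  have -> : j = i by apply: val_inj.
  by rewrite si s'i.
exists m => // s Ss.
have [si|si] := eqVneq (s ord0 i) (c ord0 i); first by apply: Hm.
right; exists i; split=> [j ji|]; first exact: Hag.
by rewrite mi lt_neqAle eq_sym si /=; apply: cmin; rewrite inE.
Qed.

End Lexicographic.

Section Topology.
Context {R : realType} {d : nat}.
Local Notation pt := 'rV[R]_d.

Lemma minksum_add (Q L : set pt) q l : Q q -> L l -> minksum Q L (q + l).
Proof. by move=> Qq Ll; exists q, l. Qed.

Lemma minksum_compact (Q L : set pt) : compact Q -> compact L -> compact (minksum Q L).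
Proof.
move=> cQ cL.
have -> : minksum Q L = (fun p : pt * pt => p.1 + p.2) @` (Q `*` L).
  apply/seteqP; split=> z; first by case=> q [l [Qq [Ll ->]]]; exists (q, l).
  by case=> [[q l]] [/= Qq Ll] <-; exact: minksum_add.
apply: continuous_compact; last exact: compact_setX.
by apply: continuous_subspaceT => x ?; exact: add_continuous.
Qed.

Lemma continuous_within_normP (U : set pt) (f : pt -> R) :
  {within U, continuous f} <->
  (forall x, U x -> forall e, 0 < e -> exists2 r, 0 < r &
     forall y, U y -> `|x - y| < r -> `|f x - f y| < e).
Proof.
rewrite subspace_continuousP; split=> [H x Ux e e0|H x Ux].
  have /cvgrPdist_lt /(_ e e0) /nbhs_ballP [r r0 Hr] := H x Ux.
  by exists r => // y Uy xy; apply: (Hr y) => //; rewrite -ball_normE.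
apply/cvgrPdist_lt => e e0; have [r r0 Hr] := H x Ux e e0.
apply/nbhs_ballP; exists r => // y; rewrite -ball_normE /= => xy Uy; exact: Hr.
Qed.

Lemma supdist_ge (U : set pt) (f g : pt -> R) y : compact U ->
  {within U, continuous f} -> {within U, continuous g} -> U y ->
  `|f y - g y| <= supdist U f g.
Proof.
move=> cU cf cg Uy.
have ch : {within U, continuous (fun x => `|f x - g x|)}.
  by move=> x; apply: cvg_norm; exact: cvgB (cf x) (cg x).
have [c Uc cmax] := compact_EVT_max (ex_intro _ y Uy) cU ch.
apply: sup_upper_bound; last by exists y.
split; first by exists `|f y - g y|, y.
by exists `|f c - g c| => _ [x Ux <-]; apply: cmax; rewrite inE.
Qed.

Lemma supdist_le (U : set pt) (f g : pt -> R) e : 0 <= e ->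
  (forall y, U y -> `|f y - g y| <= e) -> supdist U f g <= e.
Proof.
move=> e0 fge; have [[y Uy]|U0] := pselect (U !=set0).
  by apply: ge_sup => [|_ [x Ux <-]]; [exists `|f y - g y|, y | exact: fge].
rewrite /supdist (_ : [set `|f x - g x| | x in U] = set0) ?sup0 //.
by apply/seteqP; split=> // z [x Ux _]; apply: U0; exists x.
Qed.

End Topology.

Section Argmax.
Context {R : realType} {d : nat}.
Local Notation pt := 'rV[R]_d.

Lemma compact_argmax (Q : set pt) (g : pt -> R) : compact Q ->
  {within Q, continuous g} -> Q !=set0 ->
  compact (argmax Q g) /\ argmax Q g !=set0.
Proof.
move=> cQ cg Q0.
have [c Qc cmax] := compact_EVT_max Q0 cQ cg.
rewrite inE in Qc.
have -> : argmax Q g = [set s | g c <= g s] `&` Q.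
  apply/seteqP; split=> s; first by case=> Qs Hs; split => //; apply: Hs.
  by case=> /= cs Qs; split => // s' Qs'; apply: le_trans cs; apply: cmax; rewrite inE.
split; last by exists c; rewrite /setI /=; split.
apply: (proj1 (compact_subspaceIP Q _)); rewrite setIC; apply: compact_closedI.
  by have := proj2 (compact_subspaceIP Q Q); rewrite setIid; apply.
exact: (proj1 (continuous_closedP (from_subspace Q g)) cg _ (@closed_ge R (g c))).
Qed.

Lemma argmax_dist_le (Q : set pt) (f g : pt -> R) t m e :
  argmax Q f t -> argmax Q g m -> (forall y, Q y -> `|f y - g y| <= e) ->
  `|g m - f t| <= e.
Proof.
move=> [Qt ft] [Qm gm] fge.
have := fge t Qt; have := fge m Qm; have := ft m Qm; have := gm t Qt.
by rewrite !ler_norml => ? ? /andP[? ?] /andP[? ?]; apply/andP; split; lra.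
Qed.

(* Off a ball around t, f stays below f t by a definite margin (compactness of the
   complement in Q), which a perturbation of less than half that margin cannot close. *)
Lemma argmax_set1_stable (Q : set pt) (f : pt -> R) t : compact Q ->
  {within Q, continuous f} -> argmax Q f = [set t] ->
  forall del, 0 < del -> exists2 eps, 0 < eps & forall g : pt -> R,
   (forall y, Q y -> `|f y - g y| < eps) -> forall s, argmax Q g s -> `|t - s| < del.
Proof.
move=> cQ cf amf del del0.
have [Qt ft] : argmax Q f t by rewrite amf.
pose A := Q `&` ~` ball t del.
have farA s : Q s -> del <= `|t - s| -> A s.
  by move=> Qs ds; split=> //; rewrite -ball_normE /= ltNge ds.
have [[a Aa]|A0] := pselect (A !=set0); last first.
  exists 1 => // g _ s [Qs _]; rewrite ltNge; apply/negP => ds.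
  by apply: A0; exists s; exact: farA.
have cA : compact A by apply: compact_closedI => //; rewrite closedC; exact: ball_open.
have cfA : {within A, continuous f} by apply: continuous_subspaceW cf; apply: subIsetl.
have [c Ac cmax] := compact_EVT_max (ex_intro _ a Aa) cA cfA.
rewrite inE in Ac; case: Ac => Qc nbc.
have fct : f c < f t.
  rewrite lt_neqAle ft // andbT; apply/negP => /eqP fct.
  have : argmax Q f c by split => // s Qs; rewrite fct; exact: ft.
  by rewrite amf /= => ect; apply: nbc; rewrite ect; exact: ballxx.
exists ((f t - f c) / 2) => [|g fg s [Qs gs]]; first by rewrite divr_gt0 // subr_gt0.
rewrite ltNge; apply/negP => ds.
have fsc : f s <= f c by apply: cmax; rewrite inE; exact: farA.
have := fg s Qs; have := fg t Qt; have := gs t Qt.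
by rewrite !ltr_norml => gts /andP[h1 h2] /andP[h3 h4]; clear -fsc gts h1 h2 h3 h4; lra.
Qed.

Lemma lexinf_argmax_near (Q : set pt) (f : pt -> R) t : compact Q ->
  {within Q, continuous f} -> argmax Q f = [set t] ->
  forall del, 0 < del -> exists2 eps, 0 < eps & forall g : pt -> R,
   {within Q, continuous g} -> (forall y, Q y -> `|f y - g y| < eps) ->
   exists m, [/\ argmax Q g m, lexinf (argmax Q g) m & `|t - m| < del].
Proof.
move=> cQ cf amf del del0.
have [eps eps0 Heps] := argmax_set1_stable cQ cf amf del0.
exists eps => // g cg fg.
have [Qt _] : argmax Q f t by rewrite amf.
have [cam am0] := compact_argmax cQ cg (ex_intro _ t Qt).
have [m am Hm] := compact_lexmin cam am0.
by exists m; split; [|exact: lexinf_min|exact: Heps am].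
Qed.

End Argmax.

Section Shiftnorm.
Context {R : realType} {d : nat}.
Local Notation pt := 'rV[R]_d.

(* Tube lemma in the form of [near_covering_within]: the compactness of K upgrades
   the continuity of f at each point t + x to a bound uniform in x. *)
Lemma shift_close_uniform (U Q K : set pt) (f : pt -> R) t :
  compact K -> {within U, continuous f} -> Q t ->
  (forall s x, Q s -> K x -> U (s + x)) ->
  forall eta, 0 < eta -> exists2 r, 0 < r & forall s, Q s -> `|t - s| < r ->
     forall x, K x -> `|f (t + x) - f (s + x)| < eta.
Proof.
move=> cK cf Qt QKU eta eta0.
have NC := proj2 (near_covering_withinP K) (proj1 (compact_near_coveringP K) cK).
have /nbhs_ballP [r r0 Hr] : nbhs t (fun s =>
    forall x, K x -> Q s -> `|f (t + x) - f (s + x)| < eta).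
  apply: (NC pt (nbhs t) (fun s x => Q s -> `|f (t + x) - f (s + x)| < eta)) => x Kx.
  have [r r0 Hr] := proj1 (continuous_within_normP U f) cf (t + x) (QKU t x Qt Kx)
    (eta / 2) ltac:(by rewrite divr_gt0).
  exists (ball x (r / 2), ball t (r / 2)).
    by split=> /=; apply: nbhsx_ballx; rewrite divr_gt0.
  case=> x' s [/= bx bs] Kx' Qs; rewrite -ball_normE /= in bx bs.
  have h1 : `|f (t + x) - f (t + x')| < eta / 2.
    by apply: Hr; [exact: QKU|rewrite opprD addrACA subrr add0r; lra].
  have h2 : `|f (t + x) - f (s + x')| < eta / 2.
    apply: Hr; first exact: QKU.
    by rewrite opprD addrACA; apply: le_lt_trans (ler_normD _ _) _; lra.
  rewrite (_ : f (t + x') - f (s + x') =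
    (f (t + x) - f (s + x')) - (f (t + x) - f (t + x'))); last by ring.
  by apply: le_lt_trans (ler_normB _ _) _; lra.
by exists r => // s Qs ts x Kx; apply: Hr => //; rewrite -ball_normE.
Qed.

Lemma shiftnorm_Cnn (U K : set pt) (g : pt -> R) m :
  Cnn U g -> (forall x, K x -> U (m + x)) -> 0 < g m -> Cnn K (shiftnorm K g m).
Proof.
move=> [_ [cg gpos]] KU gm0; split.
  by move=> x Kx; rewrite /shiftnorm ifF //; apply/negP; rewrite inE.
split; last first.
  move=> x Kx; rewrite /shiftnorm ifT ?inE //.
  by rewrite divr_ge0 ?(ltW gm0) //; apply: gpos; exact: KU.
apply/continuous_within_normP => x Kx e e0.
have [r r0 Hr] := proj1 (continuous_within_normP U g) cg (m + x) (KU x Kx)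
  (e * g m) (mulr_gt0 e0 gm0).
exists r => // y Ky xy.
rewrite /shiftnorm !ifT ?inE // -mulrBl normrM normfV (gtr0_norm gm0) ltr_pdivrMr //.
by apply: Hr; [exact: KU|rewrite opprD addrACA subrr add0r].
Qed.

Lemma shiftnorm_supdist_lt (K : set pt) (f g : pt -> R) t m M eps e :
  0 < e -> 0 < f t -> f t / 2 <= g m -> `|g m - f t| <= eps ->
  (forall x, K x -> 0 <= f (t + x) <= M) ->
  (forall x, K x -> `|f (t + x) - g (m + x)| <= 2 * eps) ->
  eps * (4 * (M + 2 * f t)) <= e * (f t * f t) ->
  supdist K (shiftnorm K f t) (shiftnorm K g m) < e.
Proof.
move=> e0 ft0 gm fgm fM fg epsM.
apply: (@le_lt_trans _ _ (e / 2)); last by lra.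
apply: supdist_le => [|x Kx]; first by rewrite divr_ge0 // ltW.
have /andP[fx0 fxM] := fM x Kx.
by rewrite /shiftnorm !ifT ?inE //; exact: quotient_dist_le ft0 gm fx0 fxM fgm (fg x Kx) epsM.
Qed.

Section Continuity.
Variables (Q K L : set pt) (f : pt -> R) (t : pt).
Hypotheses (cQ : compact Q) (cK : compact K) (cL : compact L) (KL : K `<=` L).
Hypotheses (Cf : Cnn (minksum Q L) f) (QU : Q `<=` minksum Q L).
Hypotheses (amf : argmax Q f = [set t]) (ft0 : 0 < f t).
Local Notation U := (minksum Q L).

Lemma shiftnorm_argmax_continuous e : 0 < e -> exists2 r, 0 < r &
  forall g, Cnn U g -> supdist U f g < r -> exists m,
    [/\ argmax Q g m, lexinf (argmax Q g) m, 0 < g m &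
        supdist K (shiftnorm K f t) (shiftnorm K g m) < e].
Proof.
move=> e0; case: Cf => _ [cf fpos].
have tmax : argmax Q f t by rewrite amf.
have Qt := tmax.1.
have QKU (s x : pt) : Q s -> K x -> U (s + x).
  by move=> Qs Kx; exact: minksum_add Qs (KL Kx).
have cU : compact U by exact: minksum_compact.
have [c Uc cmax] := compact_EVT_max (ex_intro _ t (QU Qt)) cU cf.
have fM y : U y -> f y <= f c by move=> Uy; apply: cmax; rewrite inE.
have ftc : f t <= f c := fM t (QU Qt).
(* The first bound keeps g m >= f t / 2, the second is what [quotient_dist_le] needs. *)
pose eps := Num.min (f t / 2) (e * (f t * f t) / (4 * (f c + 2 * f t))).
have M0 : 0 < 4 * (f c + 2 * f t).
  by rewrite mulr_gt0 // addr_gt0 ?mulr_gt0 //; exact: lt_le_trans ft0 ftc.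
have eps0 : 0 < eps by rewrite lt_min !divr_gt0 // ?mulr_gt0.
have epsA : eps <= f t / 2 by rewrite ge_min lexx.
have epsM : eps * (4 * (f c + 2 * f t)) <= e * (f t * f t).
  by rewrite -ler_pdivlMr // ge_min lexx orbT.
have [del del0 Hdel] := shift_close_uniform cK cf Qt QKU eps0.
have cfQ : {within Q, continuous f} by exact: continuous_subspaceW cf.
have [r r0 Hr] := lexinf_argmax_near cQ cfQ amf del0.
exists (Num.min eps r) => [|g [_ [cg _]] fg]; first by rewrite lt_min eps0.
have close y : U y -> `|f y - g y| < eps /\ `|f y - g y| < r.
  by move=> Uy; apply/andP; rewrite -lt_min; apply: le_lt_trans fg; exact: supdist_ge.
have [m [am lm tm]] :=
  Hr g (continuous_subspaceW QU cg) (fun y Qy => (close y (QU Qy)).2).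
have closeU y : U y -> `|f y - g y| < eps by move=> /close[].
have gmt : `|g m - f t| <= eps.
  by apply: argmax_dist_le tmax am _ => y Qy; apply/ltW/closeU/QU.
have gm : f t / 2 <= g m by move: gmt; rewrite ler_norml => /andP[? ?]; lra.
exists m; split => //; first by apply: lt_le_trans gm; rewrite divr_gt0.
apply: (shiftnorm_supdist_lt e0 ft0 gm gmt) epsM => x Kx.
  by rewrite fpos ?fM //; exact: QKU.
have k1 := Hdel m am.1 tm x Kx; have k2 := closeU (m + x) (QKU m x am.1 Kx).
rewrite (_ : f (t + x) - g (m + x) = (f (t + x) - f (m + x)) + (f (m + x) - g (m + x))).
  by apply: le_trans (ler_normD _ _) _; lra.
by ring.
Qed.

End Continuity.
End Shiftnorm.

Theorem lemmaA2 (R : realType) (d : nat) (Q K L : set 'rV[R]_d)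
  (B : set ('rV[R]_d -> R)) :
  compact Q -> compact K -> compact L -> K `<=` L ->
  CBorel K B ->
  C_B_star Q K L B `<=` Cinterior (minksum Q L) (C_B Q K L B).
Proof.
move=> cQ cK cL KL _ f [Cf [QU [[t amf] [tau [ltau [ftau0 [_ [Bf [e [e0 He]]]]]]]]]].
have tau_t : tau = t by apply: lexinf_set1_eq; rewrite -amf.
subst tau.
have [Qt _] : argmax Q f t by rewrite amf.
have ft0 : 0 < f t by rewrite lt_neqAle eq_sym ftau0 Cf.2.2 //; exact: QU.
have [r r0 Hr] := shiftnorm_argmax_continuous cQ cK cL KL Cf QU amf ft0 e0.
split=> //; split.
  by split=> //; split=> //; exists t; rewrite amf; split=> //; exact: lexinf_set1.
exists r; split=> // g Cg fg.
have [m [am lm gm0 dm]] := Hr g Cg fg.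
split=> //; split=> //; exists m; split=> //; split; first by rewrite gt_eqF.
apply: He dm; apply: shiftnorm_Cnn Cg _ gm0 => x Kx.
by case: am => Qm _; exact: minksum_add Qm (KL _ Kx).
Qed.
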